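(* Let $m,n\in\mathbb{N}$. For $1\le\ell\le m$ let $0<q_{\ell}<1$ and $K_{\ell}=\frac{\pi}{2}\left(\sum_{r\in\mathbb{Z}}q_{\ell}^{r^{2}}\right)^{2}$, and let $v_{j,\ell}\in\mathbb{C}$ ($1\le j\le n$) satisfy $q_{\ell}e^{4\pi|\Im(v_{j,\ell})|}<1$ for all $1\le j\le n$, $1\le \ell\le m$. Then the $n\times n$ matrix \[ \left(\prod_{\ell=1}^{m}\mathrm{dn}\left(2K_{\ell}\left(v_{j,\ell}-\overline{v_{k,\ell}}\right)\right)\right)_{j,k=1}^{n} \] is positive semidefinite, where $\mathrm{dn}$ is computed with nome $q_\ell$ in the $\ell$-th factor.
   Context: For $0<q<1$ and $K=\frac{\pi}{2}\theta_3^2$ with $\theta_3=\sum_{r\in\mathbb{Z}}q^{r^2}$, the Jacobi elliptic function is given by $\mathrm{dn}(2Kv)=\frac{\pi}{K}\sum_{n\in\mathbb{Z}}\frac{q^{n}}{1+q^{2n}}e^{2n\pi vi}$ for $v\in\mathbb{C}$ with $qe^{2\pi|\Im(v)|}<1$. A complex matrix $A=(a_{j,k})$ is positive semidefinite if $\sum_{j,k}a_{j,k}z_j\overline{z_k}\ge0$ for all complex $z_j$. *)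

From Stdlib Require Import Reals.
From Coquelicot Require Import Coquelicot.
Open Scope R_scope.

Definition Cexp (z : C) : C :=
  (exp (Re z) * cos (Im z), exp (Re z) * sin (Im z)).

Definition CSeries (a : nat -> C) : C :=
  (Series (fun k => Re (a k)), Series (fun k => Im (a k))).

Definition RSeriesZ (a : Z -> R) : R :=
  Series (fun k => a (Z.of_nat k)) + Series (fun k => a (- Z.of_nat (S k))%Z).
Definition CSeriesZ (a : Z -> C) : C :=
  Cplus (CSeries (fun k => a (Z.of_nat k)))
        (CSeries (fun k => a (- Z.of_nat (S k))%Z)).

Definition theta3 (q : R) : R := RSeriesZ (fun r => powerRZ q (r * r)%Z).

Definition Kq (q : R) : R := PI / 2 * (theta3 q) ^ 2.

(* dn_2K q v := dn(2 K v) with nome q, given by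
   (pi/K) sum_{n in Z} q^n/(1+q^(2n)) e^(2 n pi v i). *)
Definition dn_2K (q : R) (v : C) : C :=
  Cmult (RtoC (PI / Kq q))
    (CSeriesZ (fun n =>
       Cmult (RtoC (powerRZ q n / (1 + powerRZ q (2 * n)%Z)))
             (Cexp (Cmult (RtoC (2 * IZR n * PI)) (Cmult v (0, 1)))))).

Fixpoint Csum1 (f : nat -> C) (n : nat) : C :=
  match n with O => RtoC 0 | S n' => Cplus (Csum1 f n') (f (S n')) end.
Fixpoint Cprod1 (f : nat -> C) (m : nat) : C :=
  match m with O => RtoC 1 | S m' => Cmult (Cprod1 f m') (f (S m')) end.

Definition psd (n : nat) (A : nat -> nat -> C) : Prop :=
  forall z : nat -> C,
    let s := Csum1 (fun j => Csum1 (fun k => Cmult (Cmult (A j k) (z j)) (Cconj (z k))) n) n in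
    Im s = 0 /\ 0 <= Re s.

(** Each factor is a Fourier series with nonnegative coefficients:
    [dn(2K(x - conj y)) = (pi/K) sum_n c_n e_n(x) conj(e_n(y))] with
    [c_n = q^n/(1+q^(2n)) >= 0] and [e_n(x) = exp(2 n pi i x)], and the series
    converges absolutely because [q e^(2 pi (|Im x| + |Im y|)) < 1] (its square is
    [q e^(4 pi |Im x|) * q e^(4 pi |Im y|)]).  Hence the Hadamard product of a
    positive semidefinite kernel with such a factor is a convergent nonnegative
    combination of kernels [B_jk u_j conj(u_k)], each positive semidefinite, and
    the theorem follows by induction on the number of factors. *)
From Stdlib Require Import Reals Lra Lia.
From Coquelicot Require Import Coquelicot.
Open Scope R_scope.

Lemma exp_le_compat (x y : R) : x <= y -> exp x <= exp y.
Proof. intros [H | ->]; [left; apply exp_increasing | right]; auto. Qed.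

Lemma exp_mult_INR (k : nat) (x : R) : exp (INR k * x) = exp x ^ k.
Proof.
  induction k as [|k IH].
  - rewrite Rmult_0_l, exp_0; auto.
  - rewrite S_INR; simpl pow; rewrite <- IH, <- exp_plus. f_equal; ring.
Qed.

Lemma pow_le_pow_of_le_1 (r : R) (k N : nat) : 0 <= r <= 1 -> (k <= N)%nat -> r ^ N <= r ^ k.
Proof.
  intros Hr HkN. replace N with (k + (N - k))%nat by lia. rewrite pow_add.
  assert (r ^ (N - k) <= 1) by (rewrite <- (pow1 (N - k)); apply pow_incr; lra).
  pose proof (pow_le r k (proj1 Hr)). nra.
Qed.

Lemma C_ext (a b : C) : Re a = Re b -> Im a = Im b -> a = b.
Proof. destruct a, b; simpl; intros; subst; reflexivity. Qed.

Lemma Rabs_Im_le_Cmod (c : C) : Rabs (Im c) <= Cmod c.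
Proof.
  unfold Cmod. rewrite <- sqrt_Rsqr_abs. apply sqrt_le_1_alt.
  destruct c as [a b]; unfold Rsqr; simpl. nra.
Qed.

Lemma Cmod_Cexp (w : C) : Cmod (Cexp w) = exp (Re w).
Proof.
  transitivity (sqrt (Rsqr (exp (Re w)))).
  - unfold Cmod, Cexp; simpl. f_equal.
    pose proof (sin2_cos2 (Im w)). unfold Rsqr in *. nra.
  - apply sqrt_Rsqr. left; apply exp_pos.
Qed.

Lemma Cexp_plus (w w' : C) : Cexp (w + w')%C = (Cexp w * Cexp w')%C.
Proof.
  destruct w, w'; unfold Cexp; apply C_ext; simpl; rewrite exp_plus.
  - rewrite cos_plus; ring.
  - rewrite sin_plus; ring.
Qed.

Lemma Cexp_conj (w : C) : Cexp (Cconj w) = Cconj (Cexp w).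
Proof. destruct w; unfold Cexp; apply C_ext; simpl; [rewrite cos_neg | rewrite sin_neg]; ring. Qed.

Definition ex_CSeries (a : nat -> C) : Prop :=
  ex_series (fun k => Re (a k)) /\ ex_series (fun k => Im (a k)).

Lemma CSeries_ext (a b : nat -> C) : (forall k, a k = b k) -> CSeries a = CSeries b.
Proof. intros H. unfold CSeries. f_equal; apply Series_ext; intros k; rewrite H; auto. Qed.

Lemma ex_CSeries_ext (a b : nat -> C) :
  (forall k, a k = b k) -> ex_CSeries a -> ex_CSeries b.
Proof.
  intros H [Hre Him]; split.
  - apply (ex_series_ext (fun k => Re (a k))); auto; intros k; rewrite H; auto.
  - apply (ex_series_ext (fun k => Im (a k))); auto; intros k; rewrite H; auto.
Qed.

Lemma ex_CSeries_Cmod_le (a : nat -> C) (b : nat -> R) :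
  (forall k, Cmod (a k) <= b k) -> ex_series b -> ex_CSeries a.
Proof.
  intros Hab Hb; split.
  - apply (ex_series_le (fun k => Re (a k)) b); auto; intros k.
    eapply Rle_trans; [apply re_le_Cmod | apply Hab].
  - apply (ex_series_le (fun k => Im (a k)) b); auto; intros k.
    eapply Rle_trans; [apply Rabs_Im_le_Cmod | apply Hab].
Qed.

Lemma ex_CSeries_plus (a b : nat -> C) :
  ex_CSeries a -> ex_CSeries b -> ex_CSeries (fun k => a k + b k)%C.
Proof. intros [a1 a2] [b1 b2]; split; apply (ex_series_plus (V := R_NormedModule)); auto. Qed.

Lemma CSeries_plus (a b : nat -> C) :
  ex_CSeries a -> ex_CSeries b -> CSeries (fun k => a k + b k)%C = (CSeries a + CSeries b)%C.
Proof.
  intros [a1 a2] [b1 b2]. unfold CSeries; apply C_ext; simpl.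
  - apply (Series_plus (fun k => Re (a k)) (fun k => Re (b k))); auto.
  - apply (Series_plus (fun k => Im (a k)) (fun k => Im (b k))); auto.
Qed.

Lemma ex_CSeries_scal_l (w : C) (a : nat -> C) :
  ex_CSeries a -> ex_CSeries (fun k => w * a k)%C.
Proof.
  intros [a1 a2]; split; simpl;
    [apply (ex_series_minus (V := R_NormedModule)) | apply (ex_series_plus (V := R_NormedModule))];
    apply (ex_series_scal_l (V := R_NormedModule)); auto.
Qed.

Lemma CSeries_scal_l (w : C) (a : nat -> C) :
  ex_CSeries a -> CSeries (fun k => w * a k)%C = (w * CSeries a)%C.
Proof.
  intros [a1 a2]. unfold CSeries; apply C_ext; simpl.
  - rewrite <- !Series_scal_l, <- Series_minus
      by (apply (ex_series_scal_l (V := R_NormedModule)); auto).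
    reflexivity.
  - rewrite <- !Series_scal_l, <- Series_plus
      by (apply (ex_series_scal_l (V := R_NormedModule)); auto).
    reflexivity.
Qed.

Definition nonneg_real (c : C) : Prop := Im c = 0 /\ 0 <= Re c.

Lemma CSeries_nonneg (a : nat -> C) :
  ex_CSeries a -> (forall k, nonneg_real (a k)) -> nonneg_real (CSeries a).
Proof.
  unfold nonneg_real, CSeries; intros [a1 a2] Ha; simpl. split.
  - rewrite (Series_ext _ (fun k => 0 * Im (a k))) by (intros k; rewrite (proj1 (Ha k)); ring).
    rewrite Series_scal_l; ring.
  - rewrite <- (Rmult_0_l (Series (fun k => Re (a k)))), <- Series_scal_l.
    apply Series_le; auto. intros k; destruct (Ha k); lra.
Qed.

Lemma Csum1_ext (f g : nat -> C) (n : nat) :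
  (forall j, (1 <= j <= n)%nat -> f j = g j) -> Csum1 f n = Csum1 g n.
Proof.
  induction n as [|n IH]; simpl; intros H; auto.
  rewrite IH, H; [reflexivity | lia | intros; apply H; lia].
Qed.

Lemma Csum1_plus (f g : nat -> C) (n : nat) :
  Csum1 (fun j => f j + g j)%C n = (Csum1 f n + Csum1 g n)%C.
Proof. induction n as [|n IH]; simpl. - apply C_ext; simpl; ring. - rewrite IH; ring. Qed.

Lemma Csum1_scal_l (w : C) (f : nat -> C) (n : nat) :
  Csum1 (fun j => w * f j)%C n = (w * Csum1 f n)%C.
Proof. induction n as [|n IH]; simpl. - apply C_ext; simpl; ring. - rewrite IH; ring. Qed.

Lemma Csum1_conj (f : nat -> C) (n : nat) :
  Cconj (Csum1 f n) = Csum1 (fun j => Cconj (f j)) n.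
Proof. induction n as [|n IH]; simpl. - apply C_ext; simpl; ring. - rewrite Cplus_conj, IH; auto. Qed.

Lemma ex_CSeries_Csum1 (a : nat -> nat -> C) (n : nat) :
  (forall j, (1 <= j <= n)%nat -> ex_CSeries (a j)) ->
  ex_CSeries (fun k => Csum1 (fun j => a j k) n).
Proof.
  induction n as [|n IH]; intros H; simpl.
  - apply (ex_CSeries_Cmod_le _ (fun k => (1/2) ^ k)).
    + intros k; rewrite Cmod_0; apply pow_le; lra.
    + apply ex_series_geom; rewrite Rabs_pos_eq; lra.
  - apply ex_CSeries_plus; [apply IH; intros; apply H; lia | apply H; lia].
Qed.

Lemma CSeries_Csum1 (a : nat -> nat -> C) (n : nat) :
  (forall j, (1 <= j <= n)%nat -> ex_CSeries (a j)) ->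
  CSeries (fun k => Csum1 (fun j => a j k) n) = Csum1 (fun j => CSeries (a j)) n.
Proof.
  induction n as [|n IH]; intros H; simpl.
  - unfold CSeries; apply C_ext; simpl;
      rewrite (Series_ext _ (fun _ => 0 * 0)), Series_scal_l by (intros; ring); ring.
  - rewrite CSeries_plus, IH; auto.
    + intros; apply H; lia.
    + apply ex_CSeries_Csum1; intros; apply H; lia.
    + apply H; lia.
Qed.

Section PositiveSemidefinite.

Variable n : nat.

Definition qform (A : nat -> nat -> C) (z : nat -> C) : C :=
  Csum1 (fun j => Csum1 (fun k => A j k * z j * Cconj (z k))%C n) n.

Lemma psd_qform (A : nat -> nat -> C) : psd n A <-> forall z, nonneg_real (qform A z).
Proof. reflexivity. Qed.

Lemma qform_ext (A A' : nat -> nat -> C) (z : nat -> C) :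
  (forall j k, (1 <= j <= n)%nat -> (1 <= k <= n)%nat -> A j k = A' j k) ->
  qform A z = qform A' z.
Proof.
  intros H. apply Csum1_ext; intros j Hj; apply Csum1_ext; intros k Hk. rewrite H; auto.
Qed.

Lemma psd_ext (A A' : nat -> nat -> C) :
  (forall j k, (1 <= j <= n)%nat -> (1 <= k <= n)%nat -> A j k = A' j k) ->
  psd n A -> psd n A'.
Proof. rewrite !psd_qform; intros H HA z. rewrite <- (qform_ext A A' z H). apply HA. Qed.

Lemma psd_plus (A A' : nat -> nat -> C) :
  psd n A -> psd n A' -> psd n (fun j k => A j k + A' j k)%C.
Proof.
  rewrite !psd_qform; intros HA HA' z.
  assert (E : qform (fun j k => A j k + A' j k)%C z = (qform A z + qform A' z)%C).
  { unfold qform. rewrite <- Csum1_plus. apply Csum1_ext; intros j _.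
    rewrite <- Csum1_plus. apply Csum1_ext; intros k _. ring. }
  rewrite E. unfold nonneg_real in *.
  destruct (HA z), (HA' z), (qform A z), (qform A' z); simpl in *.
  split; lra.
Qed.

Lemma psd_scal_l (c : R) (A : nat -> nat -> C) :
  0 <= c -> psd n A -> psd n (fun j k => c * A j k)%C.
Proof.
  rewrite !psd_qform; intros Hc HA z.
  assert (E : qform (fun j k => c * A j k)%C z = (c * qform A z)%C).
  { unfold qform. rewrite <- Csum1_scal_l. apply Csum1_ext; intros j _.
    rewrite <- Csum1_scal_l. apply Csum1_ext; intros k _. ring. }
  rewrite E. unfold nonneg_real in *.
  destruct (HA z) as [h1 h2], (qform A z) as [x y]; simpl in *.
  split; [rewrite h1; ring | nra].
Qed.

Lemma qform_mult_rank1 (B : nat -> nat -> C) (u z : nat -> C) :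
  qform (fun j k => B j k * (u j * Cconj (u k)))%C z = qform B (fun j => z j * u j)%C.
Proof.
  apply Csum1_ext; intros j _; apply Csum1_ext; intros k _.
  rewrite Cmult_conj. ring.
Qed.

Lemma psd_mult_rank1 (B : nat -> nat -> C) (u : nat -> C) :
  psd n B -> psd n (fun j k => B j k * (u j * Cconj (u k)))%C.
Proof. rewrite !psd_qform; intros HB z. rewrite qform_mult_rank1. apply HB. Qed.

Lemma psd_ones : psd n (fun _ _ => RtoC 1).
Proof.
  apply psd_qform; intros z.
  assert (E : qform (fun _ _ => RtoC 1) z = (Csum1 z n * Cconj (Csum1 z n))%C).
  { transitivity (Csum1 (fun j => Cconj (Csum1 z n) * z j) n)%C.
    - apply Csum1_ext; intros j _.
      symmetry; rewrite Cmult_comm, Csum1_conj, <- Csum1_scal_l.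
      apply Csum1_ext; intros k _. ring.
    - rewrite Csum1_scal_l. ring. }
  rewrite E. destruct (Csum1 z n) as [x y]; unfold nonneg_real; split; simpl; nra.
Qed.

Section Series.

Variable A : nat -> nat -> nat -> C.
Hypothesis HA : forall j k, (1 <= j <= n)%nat -> (1 <= k <= n)%nat ->
  ex_CSeries (fun i => A i j k).

Let ex_CSeries_entry_weighted (z : nat -> C) (j k : nat) :
  (1 <= j <= n)%nat -> (1 <= k <= n)%nat ->
  ex_CSeries (fun i => z j * Cconj (z k) * A i j k)%C.
Proof. intros; apply ex_CSeries_scal_l, HA; auto. Qed.

Lemma ex_CSeries_qform (z : nat -> C) : ex_CSeries (fun i => qform (A i) z).
Proof.
  apply (ex_CSeries_ext (fun i =>
    Csum1 (fun j => Csum1 (fun k => z j * Cconj (z k) * A i j k)%C n) n)).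
  - intros i; apply Csum1_ext; intros j _; apply Csum1_ext; intros k _; ring.
  - apply ex_CSeries_Csum1; intros j Hj.
    apply (ex_CSeries_Csum1 (fun k i => z j * Cconj (z k) * A i j k)%C); intros k Hk.
    apply ex_CSeries_entry_weighted; auto.
Qed.

Lemma qform_CSeries (z : nat -> C) :
  qform (fun j k => CSeries (fun i => A i j k)) z = CSeries (fun i => qform (A i) z).
Proof.
  rewrite (CSeries_ext _ (fun i =>
    Csum1 (fun j => Csum1 (fun k => z j * Cconj (z k) * A i j k)%C n) n))
    by (intros i; apply Csum1_ext; intros j _; apply Csum1_ext; intros k _; ring).
  rewrite CSeries_Csum1.
  - apply Csum1_ext; intros j Hj.
    rewrite (CSeries_Csum1 (fun k i => z j * Cconj (z k) * A i j k)%C)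
      by (intros; apply ex_CSeries_entry_weighted; auto).
    apply Csum1_ext; intros k Hk.
    rewrite CSeries_scal_l by (apply HA; auto). ring.
  - intros j Hj. apply (ex_CSeries_Csum1 (fun k i => z j * Cconj (z k) * A i j k)%C).
    intros; apply ex_CSeries_entry_weighted; auto.
Qed.

Lemma psd_CSeries :
  (forall i, psd n (A i)) -> psd n (fun j k => CSeries (fun i => A i j k)).
Proof.
  intros Hpsd; apply psd_qform; intros z. setoid_rewrite psd_qform in Hpsd.
  rewrite qform_CSeries. apply CSeries_nonneg; auto using ex_CSeries_qform.
Qed.

End Series.

End PositiveSemidefinite.

Definition dn_coef (q : R) (n : Z) : R := powerRZ q n / (1 + powerRZ q (2 * n)).

Definition dn_term (q : R) (n : Z) (x y : C) : C :=
  (dn_coef q n * Cexp (RtoC (2 * IZR n * PI) * ((x - Cconj y) * (0, 1))))%C.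

Definition wave (n : Z) (x : C) : C := Cexp (RtoC (2 * IZR n * PI) * (x * (0, 1)))%C.

Lemma dn_2K_sub_conj (q : R) (x y : C) :
  dn_2K q (x - Cconj y)%C =
  (RtoC (PI / Kq q) * (CSeries (fun k => dn_term q (Z.of_nat k) x y) +
                       CSeries (fun k => dn_term q (- Z.of_nat (S k)) x y)))%C.
Proof. reflexivity. Qed.

Lemma dn_term_rank1 (q : R) (n : Z) (x y : C) :
  dn_term q n x y = (dn_coef q n * (wave n x * Cconj (wave n y)))%C.
Proof.
  unfold dn_term, wave. rewrite <- Cexp_conj, <- Cexp_plus. do 2 f_equal.
  destruct x, y; apply C_ext; simpl; ring.
Qed.

Lemma dn_coef_nonneg (q : R) (n : Z) : 0 < q -> 0 <= dn_coef q n.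
Proof.
  intros Hq. pose proof (powerRZ_le q n Hq). pose proof (powerRZ_le q (2 * n) Hq).
  apply Rmult_le_pos; auto. apply Rlt_le, Rinv_0_lt_compat; lra.
Qed.

Lemma dn_coef_opp (q : R) (n : Z) : 0 < q -> dn_coef q (- n) = dn_coef q n.
Proof.
  intros Hq. unfold dn_coef.
  replace (2 * - n)%Z with (- (n + n))%Z by lia.
  replace (2 * n)%Z with (n + n)%Z by lia.
  rewrite !powerRZ_neg', !powerRZ_add by lra.
  assert (0 < powerRZ q n) by (apply powerRZ_lt; lra).
  field; nra.
Qed.

Lemma dn_coef_le_pow (q : R) (n : Z) : 0 < q -> dn_coef q n <= q ^ Z.abs_nat n.
Proof.
  intros Hq.
  assert (Hnat : forall k, dn_coef q (Z.of_nat k) <= q ^ k).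
  { intros k. unfold dn_coef.
    replace (2 * Z.of_nat k)%Z with (Z.of_nat (k + k)) by lia.
    rewrite <- !pow_powerRZ, pow_add.
    assert (0 < q ^ k) by (apply pow_lt; lra).
    apply (Rmult_le_reg_r (1 + q ^ k * q ^ k)); [nra|].
    unfold Rdiv; rewrite Rmult_assoc, Rinv_l by nra. nra. }
  destruct (Z.le_gt_cases 0 n).
  - replace n with (Z.of_nat (Z.abs_nat n)) at 1 by lia. apply Hnat.
  - replace n with (- Z.of_nat (Z.abs_nat n))%Z at 1 by lia.
    rewrite dn_coef_opp by lra. apply Hnat.
Qed.

Lemma Cmod_dn_term_le (q : R) (n : Z) (x y : C) : 0 < q ->
  Cmod (dn_term q n x y) <= (q * exp (2 * PI * (Rabs (Im x) + Rabs (Im y)))) ^ Z.abs_nat n.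
Proof.
  intros Hq. unfold dn_term.
  rewrite Cmod_mult, Cmod_R, Cmod_Cexp, Rabs_pos_eq by (apply dn_coef_nonneg; lra).
  replace (Re _) with (- (2 * IZR n * PI * (Im x + Im y))) by (destruct x, y; simpl; ring).
  rewrite Rpow_mult_distr, <- exp_mult_INR.
  apply Rmult_le_compat.
  - apply dn_coef_nonneg; lra.
  - left; apply exp_pos.
  - apply dn_coef_le_pow; lra.
  - apply exp_le_compat.
    rewrite INR_IZR_INZ, Znat.Zabs2Nat.id_abs, abs_IZR.
    assert (Hab : - (IZR n * (Im x + Im y)) <= Rabs (IZR n) * (Rabs (Im x) + Rabs (Im y))).
    { eapply Rle_trans; [apply Rle_abs |].
      rewrite Rabs_Ropp, Rabs_mult.
      apply Rmult_le_compat_l; [apply Rabs_pos | apply Rabs_triang]. }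
    pose proof PI_RGT_0. nra.
Qed.

Lemma nome_ratio_lt_1 (q a b : R) : 0 < q ->
  q * exp (4 * PI * a) < 1 -> q * exp (4 * PI * b) < 1 -> q * exp (2 * PI * (a + b)) < 1.
Proof.
  intros Hq Ha Hb.
  assert (Hsq : (q * exp (2 * PI * (a + b))) ^ 2 = q * exp (4 * PI * a) * (q * exp (4 * PI * b))).
  { replace (2 * PI * (a + b)) with (2 * PI * a + 2 * PI * b) by ring.
    replace (4 * PI * a) with (2 * PI * a + 2 * PI * a) by ring.
    replace (4 * PI * b) with (2 * PI * b + 2 * PI * b) by ring.
    rewrite !exp_plus. ring. }
  assert (0 < q * exp (2 * PI * (a + b))) by (apply Rmult_lt_0_compat; auto using exp_pos).
  assert (0 < q * exp (4 * PI * a)) by (apply Rmult_lt_0_compat; auto using exp_pos).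
  assert (0 < q * exp (4 * PI * b)) by (apply Rmult_lt_0_compat; auto using exp_pos).
  nra.
Qed.

Lemma ex_CSeries_dn_term (q : R) (x y : C) (N : nat -> Z) : 0 < q ->
  q * exp (4 * PI * Rabs (Im x)) < 1 -> q * exp (4 * PI * Rabs (Im y)) < 1 ->
  (forall k, (k <= Z.abs_nat (N k))%nat) ->
  ex_CSeries (fun k => dn_term q (N k) x y).
Proof.
  intros Hq Hx Hy HN.
  set (r := q * exp (2 * PI * (Rabs (Im x) + Rabs (Im y)))).
  assert (Hr : 0 <= r < 1).
  { split; [unfold r; pose proof (exp_pos (2 * PI * (Rabs (Im x) + Rabs (Im y)))); nra |].
    apply nome_ratio_lt_1; auto. }
  apply (ex_CSeries_Cmod_le _ (fun k => r ^ k)).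
  - intros k. eapply Rle_trans; [apply Cmod_dn_term_le; auto |].
    apply pow_le_pow_of_le_1; auto; lra.
  - apply ex_series_geom. rewrite Rabs_pos_eq; lra.
Qed.

Lemma PI_div_Kq_nonneg (q : R) : 0 <= PI / Kq q.
Proof.
  pose proof PI_RGT_0. unfold Kq.
  destruct (pow2_ge_0 (theta3 q)) as [Ht | Ht].
  - left. apply Rdiv_lt_0_compat; [lra | nra].
  - rewrite <- Ht, Rmult_0_r. unfold Rdiv. rewrite Rinv_0. lra.
Qed.

Section HadamardDn.

Variables (n : nat) (B : nat -> nat -> C) (q : R) (v : nat -> C).
Hypotheses (HB : psd n B) (Hq : 0 < q)
  (Hv : forall j, (1 <= j <= n)%nat -> q * exp (4 * PI * Rabs (Im (v j))) < 1).

Lemma psd_mult_dn_terms (N : nat -> Z) : (forall i, (i <= Z.abs_nat (N i))%nat) ->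
  psd n (fun j k => B j k * CSeries (fun i => dn_term q (N i) (v j) (v k)))%C.
Proof.
  intros HN.
  assert (Hcv : forall j k, (1 <= j <= n)%nat -> (1 <= k <= n)%nat ->
    ex_CSeries (fun i => dn_term q (N i) (v j) (v k))).
  { intros j k Hj Hk; apply ex_CSeries_dn_term; auto. }
  apply (psd_ext n (fun j k => CSeries (fun i => B j k * dn_term q (N i) (v j) (v k)))%C).
  { intros j k Hj Hk. apply CSeries_scal_l; auto. }
  apply psd_CSeries.
  - intros j k Hj Hk; apply ex_CSeries_scal_l; auto.
  - intros i.
    apply (psd_ext n (fun j k =>
      dn_coef q (N i) * (B j k * (wave (N i) (v j) * Cconj (wave (N i) (v k)))))%C).
    { intros j k _ _. rewrite dn_term_rank1. ring. }
    apply psd_scal_l; [apply dn_coef_nonneg; auto | apply psd_mult_rank1; auto].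
Qed.

Lemma psd_mult_dn : psd n (fun j k => B j k * dn_2K q (v j - Cconj (v k)))%C.
Proof.
  apply (psd_ext n (fun j k => RtoC (PI / Kq q) *
    (B j k * CSeries (fun i => dn_term q (Z.of_nat i) (v j) (v k)) +
     B j k * CSeries (fun i => dn_term q (- Z.of_nat (S i)) (v j) (v k))))%C).
  { intros j k _ _. rewrite dn_2K_sub_conj. ring. }
  apply psd_scal_l; [apply PI_div_Kq_nonneg |].
  apply psd_plus; apply psd_mult_dn_terms; intros i; lia.
Qed.

End HadamardDn.

Theorem mainTheorem2 (m n : nat) (q : nat -> R) (v : nat -> nat -> C)
  (hq : forall l, (1 <= l <= m)%nat -> 0 < q l < 1)
  (hv : forall j l, (1 <= j <= n)%nat -> (1 <= l <= m)%nat ->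
          q l * exp (4 * PI * Rabs (Im (v j l))) < 1) :
  psd n (fun j k =>
    Cprod1 (fun l => dn_2K (q l) (Cminus (v j l) (Cconj (v k l)))) m).
Proof.
  induction m as [|m IH].
  - apply psd_ones.
  - apply (psd_mult_dn n _ (q (S m)) (fun j => v j (S m))).
    + apply IH; intros; [apply hq | apply hv]; lia.
    + apply hq; lia.
    + intros j Hj; apply hv; lia.
Qed.
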